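(* Let $1\le d<n$, let $I_1\subseteq I(d,n)$ be the set of rows containing $n$, and let $\underline j:=(n-d)(n-d+1)\cdots(n-2)\,n$. (i) $\underline j$ is the minimal element of $\mathfrak C_{\mathrm{left}}\cap I_1$. (ii) If $\underline i\in I(d,n)$ satisfies $\ell(\underline i)\ge\ell(\underline j)$, then $\underline i\in I_1$.
   Context: $I(d,n)$: $d$-subsets of $\{1,\dots,n\}$ as increasing sequences $i_1\cdots i_d$, ordered by $\underline i\le\underline j$ iff $i_k\le j_k$ for all $k$; $\ell(\underline i)=\sum_h(i_h-h)$. $\mathfrak C_{\mathrm{left}}$ is the maximal chain largest in the lexicographic order of concatenated strings $\underline i_r\cdots\underline i_0$; explicitly it is obtained from $(n-d+1)\cdots n$ by lowering successively the first, second, ..., $d$-th entries by one, then again the first, second, ..., and so on until reaching $12\cdots d$. *)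

From mathcomp Require Import all_boot.
Set Implicit Arguments. Unset Strict Implicit. Unset Printing Implicit Defensive.

Definition inI (d n : nat) (s : seq nat) : bool :=
  [&& size s == d, sorted ltn s & all (fun x => (0 < x) && (x <= n)) s].

Definition leI (s t : seq nat) : bool := all2 leq s t.

Definition ell (s : seq nat) : nat := \sum_(h < size s) (nth 0 s h - h.+1).

Definition lower (p : nat) (s : seq nat) : seq nat :=
  set_nth 0 s p (nth 0 s p).-1.

(* m-th element of the chain C_left: start at (n-d+1)...n and at step m
   lower entry number (m mod d) (0-based), i.e. first, second, ..., d-th,
   then again first, second, ... *)
Fixpoint cleft_elem (d n m : nat) : seq nat :=
  match m with
  | 0 => [seq n - d + h.+1 | h <- iota 0 d]
  | m'.+1 => lower (m' %% d) (cleft_elem d n m')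
  end.

(* C_left: the d(n-d)+1 elements, ending at 12...d *)
Definition Cleft (d n : nat) : seq (seq nat) :=
  [seq cleft_elem d n m | m <- iota 0 (d * (n - d)).+1].

Definition inI1 (d n : nat) (s : seq nat) : bool := inI d n s && (n \in s).

Definition jrow (d n : nat) : seq nat := rcons [seq n - d + h | h <- iota 0 d.-1] n.

From mathcomp Require Import all_boot.
From mathcomp Require Import zify.

(* Entries only decrease along C_left, and its first d steps lower the entries
   of (n-d+1)...n once each from the left: step d-1 is j, and from step d on
   every entry is below n.  A row avoiding n is a strictly increasing sequence
   bounded by n-1, so i_h <= n-1-(d-h) and l(i) <= d(n-d-1) < l(j). *)

Lemma all2_nth (T : Type) (r : rel T) x0 (s t : seq T) : size s = size t ->
  (forall i, i < size s -> r (nth x0 s i) (nth x0 t i)) -> all2 r s t.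
Proof.
elim: s t => [|x s IHs] [|y t] //= [eq_st] le_st.
by rewrite (le_st 0) //; apply: IHs => // i lt_is; apply: (le_st i.+1).
Qed.

Lemma sorted_ltn_nth_le_bound (s : seq nat) B k : sorted ltn s ->
  all (fun x => x <= B) s -> k < size s -> nth 0 s k + (size s - k.+1) <= B.
Proof.
elim: s k => [|x t IHt] k //= sorted_xt /andP[le_xB le_tB] lt_k.
have sorted_t := path_sorted sorted_xt.
case: k lt_k => [_|k lt_k] /=; last exact: IHt.
case: t sorted_xt sorted_t le_tB IHt => [|y t] /=; first by lia.
move=> /andP[lt_xy _] sorted_yt le_ytB IHt.
by have := IHt 0 sorted_yt le_ytB isT; rewrite /= subn1; lia.
Qed.

Lemma ell_sorted_le (s : seq nat) B : sorted ltn s -> all (fun x => x <= B) s ->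
  ell s <= size s * (B - size s).
Proof.
move=> sorted_s le_sB; rewrite /ell -[X in X * _]card_ord -sum_nat_const.
apply: leq_sum => h _.
by have := sorted_ltn_nth_le_bound _ _ _ sorted_s le_sB (ltn_ord h); lia.
Qed.

Lemma nth_lower_le p s i : nth 0 (lower p s) i <= nth 0 s i.
Proof. by rewrite /lower nth_set_nth /=; case: eqP => [->|_] //; apply: leq_pred. Qed.

Section ChainLeft.

Variables d n : nat.
Hypothesis d_gt0 : 0 < d.

Lemma size_cleft_elem m : size (cleft_elem d n m) = d.
Proof.
elim: m => [|m IHm] /=; first by rewrite size_map size_iota.
by rewrite /lower size_set_nth IHm; apply/maxn_idPr; rewrite ltn_pmod.
Qed.

Lemma nth_cleft_elem_first_round m i : m <= d -> i < d ->
  nth 0 (cleft_elem d n m) i = n - d + i + (m <= i).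
Proof.
elim: m i => [|m IHm] i le_md lt_id /=.
  by rewrite (nth_map 0) ?size_iota // nth_iota //; lia.
have le_md' := ltnW le_md.
rewrite /lower modn_small // nth_set_nth /= !IHm //.
case: eqP => [->|/eqP ne_im]; first by rewrite leqnn ltnn /=; lia.
by rewrite ltn_neqAle eq_sym ne_im.
Qed.

Lemma nth_cleft_elem_antitone m m' i : m <= m' ->
  nth 0 (cleft_elem d n m') i <= nth 0 (cleft_elem d n m) i.
Proof.
elim: m' => [|m' IHm'] le_mm'; first by rewrite leqn0 in le_mm'; rewrite (eqP le_mm').
rewrite leq_eqVlt in le_mm'; case/predU1P: le_mm' => [->|lt_mm']; first exact: leqnn.
exact: leq_trans (nth_lower_le _ _ _) (IHm' lt_mm').
Qed.

Lemma leI_cleft_elem m m' : m <= m' -> leI (cleft_elem d n m') (cleft_elem d n m).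
Proof.
move=> le_mm'; apply: all2_nth; first by rewrite !size_cleft_elem.
by move=> i _; apply: nth_cleft_elem_antitone.
Qed.

Lemma nth_jrow i : i < d -> nth 0 (jrow d n) i = if i < d.-1 then n - d + i else n.
Proof.
move=> lt_id; rewrite /jrow nth_rcons size_map size_iota.
case: ltnP => [lt_i|le_i]; first by rewrite (nth_map 0) ?size_iota // nth_iota.
by rewrite ifT //; apply/eqP; lia.
Qed.

Lemma size_jrow : size (jrow d n) = d.
Proof. by rewrite /jrow size_rcons size_map size_iota; lia. Qed.

Lemma ell_jrow : ell (jrow d n) = d.-1 * (n - d.+1) + (n - d).
Proof.
rewrite /ell size_jrow; case: d d_gt0 nth_jrow => // d' _ nth_j.
rewrite big_ord_recr /= nth_j // ltnn /= (eq_bigr (fun=> n - d'.+2)).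
  by rewrite sum_nat_const card_ord; lia.
by move=> i _; rewrite nth_j ?(leqW (ltn_ord i)) //= ltn_ord; lia.
Qed.

Hypothesis lt_dn : d < n.

Lemma cleft_elem_notin m : d <= m -> n \notin cleft_elem d n m.
Proof.
move=> le_dm; apply/negP => /(nthP 0)[i]; rewrite size_cleft_elem => lt_id nth_i.
have := nth_cleft_elem_antitone d m i le_dm.
by rewrite nth_i nth_cleft_elem_first_round // (leqNgt d i) lt_id /=; lia.
Qed.

Lemma jrow_cleft_elem : jrow d n = cleft_elem d n d.-1.
Proof.
apply: (@eq_from_nth _ 0); first by rewrite size_jrow size_cleft_elem.
move=> i; rewrite size_jrow => lt_id.
rewrite nth_jrow // nth_cleft_elem_first_round ?leq_pred //.
by case: ltnP; case: leqP => /=; lia.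
Qed.

Lemma jrow_in_Cleft : jrow d n \in Cleft d n.
Proof. by rewrite jrow_cleft_elem; apply/mapP; exists d.-1; rewrite // mem_iota; nia. Qed.

Lemma inI1_jrow : inI1 d n (jrow d n).
Proof.
rewrite /inI1 /inI size_jrow eqxx /jrow mem_rcons mem_head andbT -/(jrow d n) /=.
apply/andP; split.
  apply/(sortedP 0) => i; rewrite size_jrow => lt_i.
  by rewrite !nth_jrow //; try lia; case: (ltnP i d.-1); case: (ltnP i.+1 d.-1); lia.
apply/(all_nthP 0) => i; rewrite size_jrow => lt_id.
by rewrite nth_jrow //; case: (ltnP i d.-1); lia.
Qed.

Lemma jrow_le_Cleft_I1 s : s \in Cleft d n -> inI1 d n s -> leI (jrow d n) s.
Proof.
move=> /mapP[m _ ->] /andP[_ n_in]; rewrite jrow_cleft_elem.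
case: (ltnP m d) => [lt_md|le_dm]; first by apply: leI_cleft_elem; lia.
by rewrite (negPf (cleft_elem_notin _ le_dm)) in n_in.
Qed.

Lemma ell_lt_jrow_notin s : inI d n s -> n \notin s -> ell s < ell (jrow d n).
Proof.
move=> /and3P[/eqP size_s sorted_s le_sn] n_notin.
have le_s_pn : all (fun x => x <= n.-1) s.
  apply/allP => x x_in; have /andP[_ le_xn] := allP le_sn x x_in.
  have ne_xn : x != n by apply: contraNneq n_notin => <-.
  lia.
have := ell_sorted_le _ _ sorted_s le_s_pn; rewrite size_s ell_jrow => le_ell.
by apply: (leq_ltn_trans le_ell); case: d d_gt0 lt_dn => // d' _ lt_dn' /=; nia.
Qed.

End ChainLeft.

Theorem lemma2p28 (d n : nat) (hd1 : 1 <= d) (hdn : d < n) :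
  (* (i) jrow is the minimal element of C_left ∩ I_1 *)
  ((jrow d n \in Cleft d n) && inI1 d n (jrow d n) /\
   (forall s, s \in Cleft d n -> inI1 d n s -> leI (jrow d n) s)) /\
  (* (ii) *)
  (forall s, inI d n s -> ell (jrow d n) <= ell s -> inI1 d n s).
Proof.
split; [split|].
- by rewrite jrow_in_Cleft // inI1_jrow.
- exact: jrow_le_Cleft_I1.
- move=> s inI_s le_ell; rewrite /inI1 inI_s /=.
  by apply: contraTT le_ell => n_notin; rewrite -ltnNge ell_lt_jrow_notin.
Qed.
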